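(* Consider a multi-sender single-uniprior index-coding instance with binary messages, information-flow graph $\mathcal{G}$ and message graph $\mathcal{U}$, and let $\mathcal{V}_S$ be the vertex set of a leaf SCC of $\mathcal{G}$. Form $(\mathcal{G}',\mathcal{U}')$ by pruning this leaf SCC: select an arbitrary $v\in\mathcal{V}_S$ and remove all outgoing arcs of $v$ from $\mathcal{G}$ (the message graph and senders are unchanged). Then \[ N_{\mathrm{SCC}}(\mathcal{G}')=N_{\mathrm{SCC}}(\mathcal{G})-1,\qquad \tilde{\ell}^*(\mathcal{G}',\mathcal{U}')\le\tilde{\ell}^*(\mathcal{G},\mathcal{U}),\qquad V_{\mathrm{out}}(\mathcal{G}')=V_{\mathrm{out}}(\mathcal{G})-1, \] where $N_{\mathrm{SCC}}(\cdot)$ denotes the number of leaf SCCs.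
   Context: Multi-sender single-uniprior index coding with binary messages: there are $n$ receivers and $n$ independent messages $x_1,\dots,x_n$, each a single bit uniformly distributed on $\{0,1\}$. Receiver $i$ knows $x_i$ a priori and requests a set of messages not containing $x_i$. The information-flow graph is the directed graph $\mathcal{G}=(\mathcal{V},\mathcal{A})$ with an arc $(j\to i)$ iff receiver $i$ requests $x_j$. There are $S$ senders; sender $s$ knows a subset $\mathcal{M}_s$ of the messages, and every message is known to some sender. An index code consists of, for each sender $s$, an encoding function mapping the messages in $\mathcal{M}_s$ to $\ell_s$ bits, and for each receiver $i$ a decoding function that, from all senders' outputs together with $x_i$, returns every message requested by $i$, for all message values; its length is $\sum_s \ell_s$. $\tilde{\ell}^*(\mathcal{G},\mathcal{U})$ is the minimum length of an index code for the instance. The message graph $\mathcal{U}$ is the undirected graph on $\mathcal{V}$ with an edge $\{i,j\}$ iff some sender knows both $x_i$ and $x_j$. A leaf vertex of $\mathcal{G}$ has no outgoing arcs; $V_{\mathrm{out}}(\mathcal{G})$ is the number of non-leaf vertices. A leaf SCC is a strongly connected component of $\mathcal{G}$ with at least two vertices and no arc from it to a vertex outside it. *)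

From mathcomp Require Import all_boot.
Set Implicit Arguments. Unset Strict Implicit. Unset Printing Implicit Defensive.

(* Vertices / receivers / messages are indexed by 'I_n.
   The information-flow graph is a relation G : rel 'I_n with
   G j i  <=>  arc (j -> i)  <=>  receiver i requests message x_j.
   Senders are indexed by 'I_S; sender s knows the messages in M s. *)

Definition msgs (n : nat) := {ffun 'I_n -> bool}.

Definition is_index_code (n S : nat) (G : rel 'I_n) (M : 'I_S -> {set 'I_n})
    (l : 'I_S -> nat) (E : 'I_S -> msgs n -> seq bool)
    (D : 'I_n -> 'I_n -> ('I_S -> seq bool) -> bool -> bool) : Prop :=
  (forall s x, size (E s x) = l s) /\
  (forall s (x y : msgs n), (forall j, j \in M s -> x j = y j) -> E s x = E s y) /\
  (forall i j (x : msgs n), G j i -> D i j (fun s => E s x) (x i) = x j).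

Definition achievable (n S : nat) (G : rel 'I_n) (M : 'I_S -> {set 'I_n}) (L : nat) : Prop :=
  exists l E D, @is_index_code n S G M l E D /\ \sum_(s < S) l s = L.

Definition min_length (n S : nat) (G : rel 'I_n) (M : 'I_S -> {set 'I_n}) (L : nat) : Prop :=
  achievable G M L /\ forall L', achievable G M L' -> L <= L'.

Definition scc (n : nat) (G : rel 'I_n) (v : 'I_n) : {set 'I_n} :=
  [set u | connect G v u && connect G u v].

Definition is_leaf_scc (n : nat) (G : rel 'I_n) (C : {set 'I_n}) : bool :=
  [&& [exists v, C == scc G v], 2 <= #|C| &
      [forall u, forall w, (u \in C) && G u w ==> (w \in C)]].

Definition N_SCC (n : nat) (G : rel 'I_n) : nat :=
  #|[set C : {set 'I_n} | is_leaf_scc G C]|.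

Definition V_out (n : nat) (G : rel 'I_n) : nat :=
  #|[set v : 'I_n | [exists w, G v w]]|.

Definition prune (n : nat) (G : rel 'I_n) (v : 'I_n) : rel 'I_n :=
  [rel a b | (a != v) && G a b].

From mathcomp Require Import all_boot.
From Stdlib Require Classical Wf_nat.
Set Implicit Arguments. Unset Strict Implicit. Unset Printing Implicit Defensive.

(* Pruning keeps every arc leaving a vertex other than v, so reachability from
   a closed set avoiding v is unchanged; hence a leaf SCC avoiding v stays a
   leaf SCC and no new one appears, while the leaf SCC through v collapses to
   the singleton {v}. A code for G decodes every demand of the pruned graph, so
   the optimum can only drop; and v, lying on a cycle, is a non-leaf vertex that
   becomes a leaf. *)

Section Reachability.
Variable n : nat.
Implicit Types (G : rel 'I_n) (D : {set 'I_n}).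

Lemma closed_setP G D :
  reflect (forall u w, u \in D -> G u w -> w \in D)
          [forall u, forall w, (u \in D) && G u w ==> (w \in D)].
Proof.
apply: (iffP forallP) => [closD u w uD Guw | closD u].
  by move/forallP/(_ w): (closD u); rewrite uD Guw.
by apply/forallP => w; apply/implyP => /andP [uD Guw]; apply: closD Guw.
Qed.

Lemma connect_closed G D x y :
  (forall u w, u \in D -> G u w -> w \in D) ->
  x \in D -> connect G x y -> y \in D.
Proof.
move=> closD + /connectP [p]; elim: p x => [|z p IHp] x Dx /=; first by move=> _ ->.
by case/andP=> Gxz pz; apply: IHp pz; apply: closD Gxz.
Qed.

Lemma connect_sub_in G G' D x y :
  (forall u w, u \in D -> G u w -> w \in D) ->
  (forall u w, u \in D -> G u w -> G' u w) ->
  x \in D -> connect G x y -> connect G' x y.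
Proof.
move=> closD subG + /connectP [p]; elim: p x => [|z p IHp] x Dx /=.
  by move=> _ ->; apply: connect0.
case/andP=> Gxz pz lastp; apply: connect_trans (connect1 (subG _ _ Dx Gxz)) _.
by apply: IHp pz lastp; apply: closD Gxz.
Qed.

Lemma connect_eq_in G G' D x :
  (forall u w, u \in D -> G u w -> w \in D) ->
  (forall u w, u \in D -> G u w = G' u w) ->
  x \in D -> connect G x =1 connect G' x.
Proof.
move=> closD eqG xD y; apply/idP/idP.
  by apply: connect_sub_in closD _ xD => u w uD; rewrite eqG.
have closD' u w : u \in D -> G' u w -> w \in D by move=> uD; rewrite -eqG //; apply: closD.
by apply: connect_sub_in closD' _ xD => u w uD; rewrite eqG.
Qed.

Lemma scc_eq_in G G' D x :
  (forall u w, u \in D -> G u w -> w \in D) ->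
  (forall u w, u \in D -> G u w = G' u w) ->
  x \in D -> scc G x = scc G' x.
Proof.
move=> closD eqG xD; apply/setP => u; rewrite !inE.
have [uD | uD] := boolP (u \in D).
  by rewrite (connect_eq_in closD eqG xD) (connect_eq_in closD eqG uD).
by rewrite -(connect_eq_in closD eqG xD) (contraNF (connect_closed closD xD) uD).
Qed.

Lemma scc_self G v : v \in scc G v.
Proof. by rewrite inE connect0. Qed.

Lemma scc_eq G u v : v \in scc G u -> scc G u = scc G v.
Proof.
rewrite inE => /andP [uv vu]; apply/setP => w; rewrite !inE.
apply/andP/andP => [[uw wu] | [vw wv]]; split.
- exact: connect_trans vu uw.
- exact: connect_trans wu uv.
- exact: connect_trans uv vw.
- exact: connect_trans wv vu.
Qed.

Lemma leaf_scc_eq G C D v :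
  is_leaf_scc G C -> is_leaf_scc G D -> v \in C -> v \in D -> C = D.
Proof.
case/and3P=> /existsP [x /eqP ->] _ _ /and3P [/existsP [y /eqP ->] _ _] vx vy.
by rewrite (scc_eq vx) (scc_eq vy).
Qed.

Lemma leaf_scc_out G C v : is_leaf_scc G C -> v \in C -> exists w, G v w.
Proof.
move=> leafC vC; case/and3P: leafC => /existsP [x /eqP defC] cardC _.
have [u /andP [uC uv]] : exists u, (u \in C) && (u != v).
  apply/existsP; apply: contraTT cardC => /existsPn noOther.
  have : C \subset [set v].
    by apply/subsetP => u uC; move: (noOther u); rewrite uC inE negbK.
  by move/subset_leq_card; rewrite cards1 -ltnNge ltnS.
have : connect G v u.
  by move: vC uC; rewrite defC !inE => /andP [_ xv] /andP [xu _]; apply: connect_trans xv xu.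
case/connectP=> [[|z p]] /=; first by move=> _ uv'; rewrite uv' eqxx in uv.
by case/andP=> Gvz _ _; exists z.
Qed.

End Reachability.

Section Pruning.
Variables (n : nat) (G : rel 'I_n) (v : 'I_n).

Lemma prune_sub a b : prune G v a b -> G a b.
Proof. by case/andP. Qed.

Lemma connect_prune_from x : connect (prune G v) v x -> x = v.
Proof. by case/connectP=> [[|z p]] /=; [move=> _ -> | case/andP=> /andP [/eqP]]. Qed.

Lemma leaf_scc_prune_mem (D : {set 'I_n}) : v \in D -> ~~ is_leaf_scc (prune G v) D.
Proof.
move=> vD; apply/and3P => [[/existsP [w /eqP defD] cardD _]].
have : D \subset [set v].
  apply/subsetP => u uD; rewrite inE; apply/eqP/connect_prune_from.
  by move: vD uD; rewrite defD !inE => /andP [_ vw] /andP [wu _]; apply: connect_trans vw wu.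
by move/subset_leq_card; rewrite cards1 => /(leq_trans cardD).
Qed.

Lemma leaf_scc_prune_notin (D : {set 'I_n}) :
  v \notin D -> is_leaf_scc (prune G v) D = is_leaf_scc G D.
Proof.
move=> vD; have agree u w : u \in D -> G u w = prune G v u w.
  by move=> uD; rewrite /prune /=; case: eqP uD vD => // -> ->.
rewrite /is_leaf_scc.
have [closD | openD] := boolP [forall u, forall w, (u \in D) && G u w ==> (w \in D)].
  move/closed_setP: closD => closD.
  have -> : [forall u, forall w, (u \in D) && prune G v u w ==> (w \in D)].
    by apply/closed_setP => u w uD; rewrite -agree //; apply: closD.
  congr [&& _, _ & _]; apply/existsP/existsP => [] [w /eqP defD]; exists w.
  - by rewrite defD (scc_eq_in closD agree) // defD scc_self.
  - by rewrite defD -(scc_eq_in closD agree) // defD scc_self.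
suff /negbTE -> : ~~ [forall u, forall w, (u \in D) && prune G v u w ==> (w \in D)].
  by rewrite !andbF.
apply: contra openD => /closed_setP closD; apply/closed_setP => u w uD.
by rewrite agree //; apply: closD.
Qed.

Lemma leaf_scc_prune (C D : {set 'I_n}) : is_leaf_scc G C -> v \in C ->
  is_leaf_scc (prune G v) D = is_leaf_scc G D && (D != C).
Proof.
move=> leafC vC; have [vD | vD] := boolP (v \in D).
  rewrite (negbTE (leaf_scc_prune_mem vD)); case leafD: (is_leaf_scc G D) => //=.
  by rewrite (leaf_scc_eq leafD leafC vD vC) eqxx.
have -> : D != C by apply: contraNneq vD => ->.
by rewrite andbT leaf_scc_prune_notin.
Qed.

Lemma V_out_prune : (exists w, G v w) -> V_out (prune G v) = V_out G - 1.
Proof.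
move=> [w Gvw]; rewrite /V_out.
have -> : [set u | [exists w, prune G v u w]] = [set u | [exists w, G u w]] :\ v.
  apply/setP => u; rewrite !inE; apply/existsP/andP => [[x /andP [uv Gux]] | [uv /existsP [x Gux]]].
    by split=> //; apply/existsP; exists x.
  by exists x; apply/andP.
have vOut : [exists w, G v w] by apply/existsP; exists w.
by rewrite [in RHS](cardsD1 v) inE vOut add1n subn1.
Qed.

End Pruning.

Section Codes.
Variables (n S : nat) (M : 'I_S -> {set 'I_n}).

Lemma achievable_sub (G G' : rel 'I_n) L :
  subrel G' G -> achievable G M L -> achievable G' M L.
Proof.
move=> subG [l [E [D [[sizeE [localE decD] sumL]]]]].
by exists l, E, D; do 3!split=> //; move=> i j x /subG; apply: decD.
Qed.

Lemma achievable_min_length (G : rel 'I_n) L :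
  achievable G M L -> exists2 L', min_length G M L' & L' <= L.
Proof.
move=> achL; have decP k : achievable G M k \/ ~ achievable G M k.
  exact: Classical_Prop.classic.
have [m [[achm minm] _]] :=
  Wf_nat.dec_inh_nat_subset_has_unique_least_element _ decP (ex_intro _ L achL).
by exists m; [split=> // L' /minm/leP | apply/leP/minm].
Qed.

End Codes.

Theorem proposition3 (n S : nat) (G : rel 'I_n) (M : 'I_S -> {set 'I_n})
    (C : {set 'I_n}) (v : 'I_n) :
  (forall i : 'I_n, ~~ G i i) ->
  (forall j : 'I_n, exists s : 'I_S, j \in M s) ->
  is_leaf_scc G C -> v \in C ->
  N_SCC (prune G v) = N_SCC G - 1 /\
  (forall L, min_length G M L ->
     exists L', min_length (prune G v) M L' /\ L' <= L) /\
  V_out (prune G v) = V_out G - 1.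
Proof.
move=> _ _ leafC vC; split; last split.
- rewrite /N_SCC.
  have -> : [set D | is_leaf_scc (prune G v) D] = [set D | is_leaf_scc G D] :\ C.
    by apply/setP => D; rewrite !inE (leaf_scc_prune D leafC vC) andbC.
  by rewrite [in RHS](cardsD1 C) inE leafC add1n subn1.
- move=> L [achL _].
  have [L' minL' le_L'L] := achievable_min_length (achievable_sub (@prune_sub _ G v) achL).
  by exists L'.
- exact: V_out_prune (leaf_scc_out leafC vC).
Qed.
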